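(* Let $p>q$ be primes and let $G$ be a transitive permutation group of degree $pq$ containing a transitive subgroup $H$ which is imprimitive with $q$ blocks of size $p$ (i.e. $H$ preserves a partition of the underlying set into $q$ blocks of size $p$). Then $\rho(G)=1$.
   Context: For a permutation group $G$ on a set $V$, two elements $g,h\in G$ are intersecting if $g(v)=h(v)$ for some $v\in V$; a subset $\mathcal{F}\subseteq G$ is intersecting if every pair of its elements is intersecting. The intersection density of $G$ is $\rho(G)=\max\{|\mathcal{F}|:\mathcal{F}\subseteq G \text{ intersecting}\}/\max_{v\in V}|G_v|$, where $G_v$ is the stabilizer of $v$. *)

From mathcomp Require Import all_boot all_order all_algebra all_fingroup.
Local Open Scope group_scope.
Set Implicit Arguments. Unset Strict Implicit. Unset Printing Implicit Defensive.

Definition perm_intersecting (T : finType) (g h : {perm T}) : bool :=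
  [exists v : T, g v == h v].

Definition intersecting_set (T : finType) (F : {set {perm T}}) : bool :=
  [forall g in F, forall h in F, perm_intersecting g h].

Definition max_intersecting (T : finType) (G : {set {perm T}}) : nat :=
  \max_(F in powerset G | intersecting_set F) #|F|.

Definition max_stabilizer (T : finType) (G : {set {perm T}}) : nat :=
  \max_(v : T) #|'C_G[v | 'P]|.

Definition intersection_density (T : finType) (G : {set {perm T}}) : rat :=
  ((max_intersecting G)%:R / (max_stabilizer G)%:R)%R.

Definition preserves_partition (T : finType) (H : {set {perm T}})
  (P : {set {set T}}) : bool :=
  [forall h in H, forall B in P, ((fun x => h x) @: B) \in P].

From mathcomp Require Import all_boot all_order all_algebra all_fingroup all_solvable.
Set Implicit Arguments. Unset Strict Implicit. Unset Printing Implicit Defensive.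
Local Open Scope group_scope.

(* The strategy is the clique-coclique bound.  If G contains #|T|
   permutations that pairwise disagree at every point, then the map
   (i, f) |-> (s i)^-1 * f is injective on pairs with f in an intersecting
   set F, so #|F| <= #|G| / #|T|, which for transitive G is the order of a
   point stabiliser; stabilisers are themselves intersecting, so rho(G) = 1.

   Such a family is built inside H as the grid y ^+ b * x ^+ a (b < q, a < p):
   - a p-element of H fixes every block (there are q < p of them); counting
     in a Sylow p-subgroup gives a p-element x of H moving every point;
   - a Sylow q-subgroup of H moves some block, giving a q-element y of H
     moving every block;
   and then the powers of y separate blocks while the powers of x separate
   points inside a block. *)

Section CyclicOrbits.

Variables (aT : finGroupType) (rT : finType) (to : {action aT &-> rT}).

(* A point fixed by w ^+ k with k coprime to #[w] is fixed by w, since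
   w ^+ k generates <[w]>. *)
Lemma fix_coprime w k x : coprime #[w] k -> to x (w ^+ k) = x -> to x w = x.
Proof.
move=> cop_wk fix_x; apply/astab1P.
have gen_wk := generator_coprime w k; rewrite cop_wk /generator in gen_wk.
have: w \in <[w ^+ k]> by rewrite -(eqP gen_wk) cycle_id.
by apply/subsetP; rewrite cycle_subG; apply/astab1P.
Qed.

Lemma pelt_orbit_pfactor p w x :
  prime p -> p.-elt w -> exists j, #|orbit to <[w]> x| = (p ^ j)%N.
Proof.
move=> pr_p p_w; have [e ow] := p_natP p_w.
have: #|orbit to <[w]> x| %| p ^ e by rewrite card_orbit -ow dvdn_indexg.
by case/(dvdn_pfactor _ _ pr_p) => j _ ->; exists j.
Qed.

Lemma cycle_orbit1 w x : #|orbit to <[w]> x| = 1%N -> to x w = x.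
Proof.
move/eqP/cards1P=> [z orb_x]; apply/afix1P; rewrite -afix_cycle; apply/orbit1P.
by have:= orbit_refl to <[w]> x; rewrite orb_x => /set1P ->.
Qed.

Lemma cycle_orbit_sub w (S : {set rT}) x :
  to^* S w = S -> x \in S -> orbit to <[w]> x \subset S.
Proof.
move=> wS Sx; apply/subsetP=> _ /orbitP [g wg <-].
have: g \in 'C[S | to^*].
  by move: g wg; apply/subsetP; rewrite cycle_subG; apply/astab1P.
by move/astab1P=> <-; apply: mem_setact.
Qed.

Lemma pelt_fix_small_orbit p w x :
  prime p -> p.-elt w -> (#|orbit to <[w]> x| < p)%N -> to x w = x.
Proof.
move=> pr_p p_w; have [[|j] orb_x] := pelt_orbit_pfactor x pr_p p_w.
  by move=> _; apply: cycle_orbit1.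
by rewrite orb_x expnS ltnNge leq_pmulr // expn_gt0 prime_gt0.
Qed.

(* A p-element stabilising a set of p points fixes either all of them or none:
   an orbit inside the set is either a point or the whole set. *)
Lemma pelt_fix_all p w (S : {set rT}) u v :
  prime p -> p.-elt w -> to^* S w = S -> #|S| = p ->
  u \in S -> v \in S -> to v w = v -> to u w = u.
Proof.
move=> pr_p p_w wS cardS Su Sv fix_v.
have [[|j] orb_u] := pelt_orbit_pfactor u pr_p p_w; first exact: cycle_orbit1.
have orb_uS : orbit to <[w]> u = S.
  apply/eqP; rewrite eqEcard cycle_orbit_sub // cardS orb_u expnS.
  by rewrite leq_pmulr // expn_gt0 prime_gt0.
have orb_v : orbit to <[w]> v = [set v].
  by apply/orbit1P; rewrite afix_cycle; apply/afix1P.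
have: u \in orbit to <[w]> v by rewrite orbit_sym orb_uS.
by rewrite orb_v => /set1P ->.
Qed.

Lemma pelt_moves_powers p w x k :
  prime p -> p.-elt w -> to x w != x -> (0 < k < p)%N -> to x (w ^+ k) != x.
Proof.
move=> pr_p p_w move_x /andP [k_gt0 lt_kp]; apply: contra move_x => /eqP fix_x.
apply/eqP; apply: fix_coprime fix_x.
have [e ->] := p_natP p_w; rewrite coprimeXl // prime_coprime //.
by apply: contraL lt_kp => /(dvdn_leq k_gt0); rewrite leqNgt.
Qed.

Lemma pelt_powers_distinct p w z a c :
  prime p -> p.-elt w -> (forall u, u \in orbit to <[w]> z -> to u w != u) ->
  a != c -> (a < p)%N -> (c < p)%N -> to z (w ^+ a) != to z (w ^+ c).
Proof.
move=> pr_p p_w moves_orb; wlog lt_ac : a c / (a < c)%N.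
  move=> lt_case neq_ac lt_ap lt_cp.
  case: (ltngtP a c) => [lt_ac|lt_ca|eq_ac]; first exact: lt_case.
    by rewrite eq_sym lt_case // eq_sym.
  by rewrite eq_ac eqxx in neq_ac.
move=> _ _ lt_cp; rewrite -(subnKC (ltnW lt_ac)) expgD actM eq_sym.
apply: (pelt_moves_powers pr_p p_w).
  by rewrite moves_orb ?mem_orbit ?groupX ?cycle_id.
by rewrite subn_gt0 lt_ac (leq_ltn_trans (leq_subr _ _)).
Qed.

End CyclicOrbits.

Lemma card_bigcup_leq (I T : finType) (A : {set I}) (F : I -> {set T}) :
  (#|\bigcup_(i in A) F i| <= \sum_(i in A) #|F i|)%N.
Proof.
elim/big_rec2: _ => [|i U s _ IH]; first by rewrite cards0.
by rewrite (leq_trans (leq_card_setU _ _)) // leq_add2l.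
Qed.

Section DensityOne.

Variables (T : finType) (G : {group {perm T}}).

Lemma card_stab_transitive v :
  [transitive G, on [set: T] | 'P] -> (#|'C_G[v | 'P]| * #|T|)%N = #|G|.
Proof.
move=> trG; rewrite -(card_orbit_in_stab 'P v (subsetT G)) mulnC.
by rewrite (atransP trG v (in_setT v)) cardsT.
Qed.

Lemma stab_intersecting v : intersecting_set 'C_G[v | 'P].
Proof.
apply/forall_inP=> g /setIP [_ /astab1P gv]; apply/forall_inP=> h.
by case/setIP=> _ /astab1P hv; apply/existsP; exists v; rewrite -!apermE gv hv.
Qed.

(* Clique-coclique bound: if the permutations s i of G pairwise disagree
   everywhere, then (s i)^-1 * f is injective on pairs (i, f) with f in an
   intersecting subset F of G, so #|I| * #|F| <= #|G|. *)
Lemma clique_coclique_bound (I : finType) (s : I -> {perm T})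
    (F : {set {perm T}}) :
  (forall i, s i \in G) -> (forall i j v, i != j -> s i v != s j v) ->
  F \subset G -> intersecting_set F -> (#|I| * #|F| <= #|G|)%N.
Proof.
move=> sG s_disagree sFG intF.
pose D := setX [set: I] F; pose phi (z : I * {perm T}) := (s z.1)^-1 * z.2.
have inj_phi : {in D &, injective phi}.
  move=> [i f] [j g] /setXP [_ Ff] /setXP [_ Fg]; rewrite /phi /= => eq_phi.
  have [eq_ij|neq_ij] := eqVneq i j.
    by move: eq_phi; rewrite eq_ij => /mulgI ->.
  have /existsP [v /eqP fv] := forall_inP (forall_inP intF f Ff) g Fg.
  have: phi (i, f) (s i v) = phi (j, g) (s j v) by rewrite !permM !permK.
  rewrite /phi /= eq_phi => /perm_inj /eqP.
  by rewrite (negbTE (s_disagree _ _ _ neq_ij)).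
have phiG : phi @: D \subset G.
  apply/subsetP=> _ /imsetP [[i f] /setXP [_ Ff] ->].
  by rewrite groupM ?groupV ?sG ?(subsetP sFG).
by have := subset_leq_card phiG; rewrite card_in_imset // cardsX cardsT.
Qed.

(* A transitive group containing #|T| permutations that pairwise disagree
   everywhere has intersection density 1: the bound above shows that no
   intersecting set is larger than a point stabiliser. *)
Lemma intersection_density_one (I : finType) (s : I -> {perm T}) :
  [transitive G, on [set: T] | 'P] -> (0 < #|T|)%N -> #|I| = #|T| ->
  (forall i, s i \in G) -> (forall i j v, i != j -> s i v != s j v) ->
  intersection_density G = 1%R.
Proof.
move=> trG T_gt0 cardI sG s_disagree; have [v0 _] := card_gt0P T_gt0.
have stabG v : (#|'C_G[v | 'P]| * #|T|)%N = #|G| := card_stab_transitive v trG.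
have max_stab : max_stabilizer G = #|'C_G[v0 | 'P]|.
  apply/eqP; rewrite eqn_leq (leq_bigmax_cond _ (erefl true)) andbT.
  apply/bigmax_leqP=> v _; rewrite -(leq_pmul2r T_gt0) !stabG //.
have max_int : max_intersecting G = #|'C_G[v0 | 'P]|.
  apply/eqP; rewrite eqn_leq (leq_bigmax_cond _ _) ?andbT; last first.
    by rewrite powersetE subsetIl stab_intersecting.
  apply/bigmax_leqP=> F /andP [/[!powersetE] sFG intF].
  rewrite -(leq_pmul2r T_gt0) stabG -cardI mulnC.
  exact: clique_coclique_bound.
rewrite /intersection_density max_int max_stab GRing.divff //.
by rewrite Num.Theory.pnatr_eq0 -lt0n cardG_gt0.
Qed.

End DensityOne.

Section ImprimitiveBlocks.

Variables (p q : nat) (T : finType) (H : {group {perm T}}) (P : {set {set T}}).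
Hypotheses (pr_p : prime p) (pr_q : prime q) (lt_qp : (q < p)%N).
Hypotheses (cardT : #|T| = (p * q)%N) (trH : [transitive H, on [set: T] | 'P]).
Hypotheses (partP : partition P [set: T]) (cardP : #|P| = q).
Hypotheses (cardB : forall B, B \in P -> #|B| = p).
Hypothesis (presP : preserves_partition H P).

Let coverP : cover P = [set: T]. Proof. by case/and3P: partP => /eqP. Qed.
Let trivP : trivIset P. Proof. by case/and3P: partP. Qed.

Lemma pblockP v : pblock P v \in P.
Proof. by rewrite pblock_mem // coverP. Qed.

Lemma mem_pblockP v : v \in pblock P v.
Proof. by rewrite mem_pblock coverP. Qed.

Lemma block_image h B : h \in H -> B \in P -> 'P^*%act B h \in P.
Proof. by move=> hH BP; have /forall_inP/(_ h hH)/forall_inP := presP; apply. Qed.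

Lemma blocks_invariant h : h \in H -> ('P^*)^*%act P h = P.
Proof.
move=> hH; apply/eqP; rewrite eqEcard card_imset; last exact: act_inj.
rewrite leqnn andbT; apply/subsetP=> _ /imsetP [B BP ->].
exact: block_image.
Qed.

Lemma block_of_image h v : h \in H -> pblock P (h v) = 'P^*%act (pblock P v) h.
Proof.
move=> hH; apply: def_pblock => //; first by rewrite block_image ?pblockP.
exact: (mem_setact 'P h (mem_pblockP v)).
Qed.

(* A p-element of H fixes every block: its orbits on the q < p blocks are
   too short to be nontrivial. *)
Lemma pelt_fixes_blocks w B : w \in H -> p.-elt w -> B \in P -> 'P^*%act B w = B.
Proof.
move=> wH p_w BP; apply: (pelt_fix_small_orbit pr_p p_w).
rewrite (leq_ltn_trans _ lt_qp) // -cardP subset_leq_card //.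
by rewrite cycle_orbit_sub ?blocks_invariant.
Qed.

Lemma index_point_stab v : #|H : 'C_H[v | 'P]| = (p * q)%N.
Proof.
apply/eqP; rewrite -(eqn_pmul2l (cardG_gt0 'C_H[v | 'P])) Lagrange ?subsetIl //.
by rewrite -cardT card_stab_transitive.
Qed.

(* A Sylow p-subgroup Px of H has no fixed point, since p * q does not divide
   its index; hence each of its point stabilisers has index at least p. *)
Lemma sylow_stab_bound (Px : {group {perm T}}) v :
  p.-Sylow(H) Px -> (p * #|'C_Px[v | 'P]| <= #|Px|)%N.
Proof.
case/and3P=> sPxH pPx p'idx; have := card_orbit_in_stab 'P v (subsetT Px).
have: p.-nat #|orbit 'P Px v|.
  by rewrite card_orbit (pnat_dvd (dvdn_indexg _ _) pPx).
case/p_natP=> [[|j] ->]; last first.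
  rewrite expnS -mulnA => <-.
  by rewrite leq_pmul2l ?leq_pmull ?expn_gt0 ?prime_gt0.
rewrite mul1n => card_stab; have /eqP stab_Px : 'C_Px[v | 'P] == Px.
  by rewrite eqEcard subsetIl card_stab leqnn.
have sPx_stab : Px \subset 'C_H[v | 'P] by rewrite subsetI sPxH -stab_Px subsetIr.
move: p'idx; rewrite -(Lagrange_index (subsetIl H _) sPx_stab) index_point_stab.
by rewrite -mulnA p'natE // dvdn_mulr.
Qed.

(* H contains a p-element moving every point: in a Sylow p-subgroup Px, an
   element fixing a point fixes its whole block pointwise, so the elements
   with a fixed point lie in q pointwise block stabilisers, each of order at
   most #|Px| / p < #|Px| / q. *)
Lemma exists_fpf_pelt : exists x, [/\ x \in H, p.-elt x & forall v, x v != v].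
Proof.
have [Px sylPx] := Sylow_exists p H; have [sPxH pPx _] := and3P sylPx.
pose U := [set w in Px | [exists v, w v == v]].
have sU : U \subset \bigcup_(B in P) 'C_Px(B | 'P).
  apply/subsetP=> w /setIdP [Px_w /existsP [v /eqP wv]].
  have [wH p_w] := (subsetP sPxH w Px_w, mem_p_elt pPx Px_w).
  apply/bigcupP; exists (pblock P v); rewrite ?pblockP // inE Px_w.
  apply/astabP=> u Bu.
  apply: (pelt_fix_all pr_p p_w _ _ Bu (mem_pblockP v)) => //.
    by rewrite pelt_fixes_blocks ?pblockP.
  by rewrite cardB ?pblockP.
have stab_block B : B \in P -> (p * #|'C_Px(B | 'P)| <= #|Px|)%N.
  move=> BP; have [u Bu] : exists u, u \in B.
    by apply/card_gt0P; rewrite cardB ?prime_gt0.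
  apply: leq_trans (sylow_stab_bound u sylPx); rewrite leq_pmul2l ?prime_gt0 //.
  rewrite subset_leq_card // setIS //; apply/subsetP=> g /astabP fixB.
  by apply/astab1P; apply: fixB.
have ltU : (#|U| < #|Px|)%N.
  have le_pU : (p * #|U| <= \sum_(B in P) p * #|'C_Px(B | 'P)|)%N.
    rewrite -big_distrr leq_pmul2l ?prime_gt0 //.
    exact: leq_trans (subset_leq_card sU) (card_bigcup_leq _ _).
  rewrite -(ltn_pmul2l (prime_gt0 pr_p)) (leq_ltn_trans le_pU) //.
  apply: (@leq_ltn_trans (\sum_(B in P) #|Px|)); first exact: leq_sum.
  by rewrite sum_nat_const cardP ltn_pmul2r ?cardG_gt0.
have /subsetPn [x Px_x Ux] : ~~ (Px \subset U).
  by apply: contraL ltU => /subset_leq_card; rewrite leqNgt.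
exists x; split; [exact: subsetP sPxH x Px_x | exact: mem_p_elt pPx Px_x |].
move=> v; apply: contra Ux => /eqP xv.
by rewrite inE Px_x; apply/existsP; exists v; rewrite xv.
Qed.

Lemma blocks_orbit B : B \in P -> orbit 'P^* H B = P.
Proof.
move=> BP; apply/eqP; rewrite eqEsubset; apply/andP; split.
  by apply/subsetP=> _ /orbitP [h hH <-]; apply: block_image.
apply/subsetP=> C CP.
have [[u Bu] [v Cv]] : (exists u, u \in B) /\ (exists v, v \in C).
  by split; apply/card_gt0P; rewrite cardB ?prime_gt0.
have /orbitP [h hH huv] : v \in orbit 'P H u by rewrite (atransP trH) ?inE.
have {}huv : h u = v := huv.
have <- : 'P^*%act B h = C.
  rewrite -(def_pblock trivP BP Bu) -block_of_image // huv.
  exact: def_pblock.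
exact: mem_orbit.
Qed.

(* H contains a q-element moving every block: a Sylow q-subgroup cannot fix
   a block B0 since the stabiliser of B0 has index q, and a q-element moving
   one of the q blocks moves all of them. *)
Lemma exists_block_cycler :
  exists y, [/\ y \in H, q.-elt y & forall B, B \in P -> 'P^*%act B y != B].
Proof.
have [B0 B0P] : exists B0, B0 \in P by apply/card_gt0P; rewrite cardP prime_gt0.
have [Qy /and3P [sQyH qQy q'idx]] := Sylow_exists q H.
have idx_B0 : #|H : 'C_H[B0 | 'P^*]| = q by rewrite -card_orbit blocks_orbit.
have /subsetPn [y Qy_y stab_y] : ~~ (Qy \subset 'C_H[B0 | 'P^*]).
  apply/negP=> sQy_stab; move: q'idx.
  by rewrite -(Lagrange_index (subsetIl H _) sQy_stab) idx_B0 p'natE // dvdn_mulr.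
have [yH q_y] := (subsetP sQyH y Qy_y, mem_p_elt qQy Qy_y).
exists y; split=> // B BP; apply: contra stab_y => /eqP fixB.
rewrite inE yH; apply/astab1P.
exact: (pelt_fix_all pr_q q_y (blocks_invariant yH) cardP B0P BP).
Qed.

Section Grid.

Variables (x y : {perm T}).
Hypotheses (xH : x \in H) (p_x : p.-elt x) (x_fpf : forall v, x v != v).
Hypotheses (yH : y \in H) (q_y : q.-elt y).
Hypothesis (y_moves_blocks : forall B, B \in P -> 'P^*%act B y != B).

(* The q * p permutations y ^+ b * x ^+ a of H pairwise disagree at every
   point: different exponents b send v to different blocks, since x fixes
   the blocks; equal b but different a give different points. *)
Lemma grid_disagree (i j : 'I_q * 'I_p) v :
  i != j -> (y ^+ i.1 * x ^+ i.2) v != (y ^+ j.1 * x ^+ j.2) v.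
Proof.
case: i j => [b a] [d c]; rewrite xpair_eqE !permM /=.
have [<-|neq_bd _] := eqVneq b d.
  move=> /= neq_ac; apply: (pelt_powers_distinct (to := 'P) pr_p p_x) => //.
  by move=> u _; apply: x_fpf.
have fix_xk k u : pblock P ((x ^+ k) u) = pblock P u.
  by rewrite block_of_image ?groupX // pelt_fixes_blocks ?groupX ?p_eltX ?pblockP.
pose C := pblock P v.
apply: contra_neq (_ : 'P^*%act C (y ^+ b) != 'P^*%act C (y ^+ d)).
  by move/(congr1 (pblock P)); rewrite !fix_xk !block_of_image ?groupX.
apply: (pelt_powers_distinct (to := 'P^*) pr_q q_y) => //.
move=> B /(subsetP (cycle_orbit_sub (blocks_invariant yH) (pblockP v))).
exact: y_moves_blocks.
Qed.

End Grid.

End ImprimitiveBlocks.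

Theorem proposition2p1 (p q : nat) (T : finType)
  (G H : {group {perm T}}) (P : {set {set T}}) :
  prime p -> prime q -> (q < p)%N ->
  #|T| = (p * q)%N ->
  [transitive G, on [set: T] | 'P] ->
  H \subset G ->
  [transitive H, on [set: T] | 'P] ->
  partition P [set: T] -> #|P| = q -> (forall B : {set T}, B \in P -> #|B| = p) ->
  preserves_partition H P ->
  intersection_density G = 1%R.
Proof.
move=> pr_p pr_q lt_qp cardT trG sHG trH partP cardP cardB presP.
have [x [xH p_x x_fpf]] :=
  exists_fpf_pelt pr_p lt_qp cardT trH partP cardP cardB presP.
have [y [yH q_y y_moves]] :=
  exists_block_cycler pr_p pr_q trH partP cardP cardB presP.
pose grid (i : 'I_q * 'I_p) := y ^+ i.1 * x ^+ i.2.
apply: (@intersection_density_one _ _ _ grid trG).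
- by rewrite cardT muln_gt0 !prime_gt0.
- by rewrite card_prod !card_ord cardT mulnC.
- by move=> i; rewrite groupM ?groupX ?(subsetP sHG).
- move=> i j v; exact: (grid_disagree pr_p pr_q lt_qp partP cardP presP).
Qed.
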